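(* Let $N,G,N_t,K$ be positive integers ($K\ge 0$ integer), $T_s>0$, $\sigma>0$, and let $\boldsymbol s^{(g,n)}\in\mathbb C^{N_t}$ be known pilot vectors for $g=1,\dots,G$, $n=0,\dots,N-1$. Let $\boldsymbol\alpha(\theta)\triangleq[1,e^{-j\pi\sin\theta},\dots,e^{-j\pi(N_t-1)\sin\theta}]^{\mathrm T}\in\mathbb C^{N_t}$. For unknown deterministic parameters $\boldsymbol\tau^\star=[\tau^\star_0,\dots,\tau^\star_K]^{\mathrm T}$, $\boldsymbol\theta^\star_{\mathrm{Tx}}=[\theta^\star_{\mathrm{Tx},0},\dots,\theta^\star_{\mathrm{Tx},K}]^{\mathrm T}$, $\boldsymbol\gamma^\star=[\gamma^\star_0,\dots,\gamma^\star_K]^{\mathrm T}\in\mathbb C^{K+1}$ and $\boldsymbol\Delta=[\Delta_\tau,\Delta_\theta]^{\mathrm T}$, define $$\boldsymbol h^{(n)}=\sum_{k=0}^K\gamma^\star_k e^{-j2\pi n\tau^\star_k/(NT_s)}\boldsymbol\alpha(\theta^\star_{\mathrm{Tx},k})^{\mathrm H},\qquad \boldsymbol\Phi^{(n)}=e^{-j2\pi n\Delta_\tau/(NT_s)}\operatorname{diag}\big(\boldsymbol\alpha(\Delta_\theta)^{\mathrm H}\big),$$ and noise-free observations $u^{(g,n)}=\boldsymbol h^{(n)}\boldsymbol\Phi^{(n)}\boldsymbol s^{(g,n)}$, observed in i.i.d. $\mathcal{CN}(0,\sigma^2)$ noise. Let $\boldsymbol\chi=[(\boldsymbol\tau^\star)^{\mathrm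 T},(\boldsymbol\theta^\star_{\mathrm{Tx}})^{\mathrm T},\mathfrak R\{\boldsymbol\gamma^\star\}^{\mathrm T},\mathfrak I\{\boldsymbol\gamma^\star\}^{\mathrm T},\boldsymbol\Delta^{\mathrm T}]^{\mathrm T}\in\mathbb R^{4K+6}$ and let $$\boldsymbol J_{\boldsymbol\chi}=\frac{2}{\sigma^2}\sum_{n=0}^{N-1}\sum_{g=1}^G\mathfrak R\Big\{\big(\nabla_{\boldsymbol\chi}u^{(g,n)}\big)^{*}\big(\nabla_{\boldsymbol\chi}u^{(g,n)}\big)^{\mathrm T}\Big\}\in\mathbb R^{(4K+6)\times(4K+6)}$$ be the associated Fisher information matrix. Then $\boldsymbol J_{\boldsymbol\chi}$ is singular.
   Context: $\nabla_{\boldsymbol\chi}u^{(g,n)}$ denotes the column vector of partial derivatives of $u^{(g,n)}$ with respect to the entries of $\boldsymbol\chi$; $(\cdot)^*$ is entrywise complex conjugation and $(\cdot)^{\mathrm H}$ the conjugate transpose. This models an eavesdropper who knows the structure of the precoder $\boldsymbol\Phi^{(n)}$ but not the shift parameters $\boldsymbol\Delta$. *)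

From HB Require Import structures.
From mathcomp Require Import all_boot all_order all_algebra.
From mathcomp Require Import all_classical all_reals all_analysis.
From mathcomp Require Import complex.
Set Implicit Arguments. Unset Strict Implicit. Unset Printing Implicit Defensive.
Import Order.TTheory GRing.Theory Num.Theory.
Local Open Scope ring_scope.

Section Model.
Variable R : realType.

Definition cexpj (x : R) : R[i] := (cos x +i* sin x)%C.

Definition herm m n (A : 'M[R[i]]_(m, n)) : 'M[R[i]]_(n, m) := (map_mx conjc A)^T.

Definition steer (Nt : nat) (th : R) : 'cV[R[i]]_Nt :=
  \col_(i < Nt) cexpj (- (pi * i%:R * sin th)).

Definition chan (N Nt K : nat) (Ts : R) (tau th : 'I_K.+1 -> R)
    (gam : 'I_K.+1 -> R[i]) (n : nat) : 'rV[R[i]]_Nt :=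
  \sum_(k < K.+1)
     (gam k * cexpj (- (2 * pi * n%:R * tau k / (N%:R * Ts)))) *: herm (steer Nt (th k)).

Definition precoder (N Nt : nat) (Ts : R) (dtau dth : R) (n : nat) : 'M[R[i]]_Nt :=
  cexpj (- (2 * pi * n%:R * dtau / (N%:R * Ts))) *: diag_mx (herm (steer Nt dth)).

(* Layout of chi in R^{4K+6} = R^{(4K+5).+1}:
   [tau_0..tau_K, theta_0..theta_K, Re gamma_0..Re gamma_K, Im gamma_0..Im gamma_K,
    Delta_tau, Delta_theta]. *)
Definition chi_tau K (chi : 'rV[R]_((4 * K + 5).+1)) (k : 'I_K.+1) : R :=
  chi 0 (inord k).
Definition chi_th K (chi : 'rV[R]_((4 * K + 5).+1)) (k : 'I_K.+1) : R :=
  chi 0 (inord (K.+1 + k)).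
Definition chi_gam K (chi : 'rV[R]_((4 * K + 5).+1)) (k : 'I_K.+1) : R[i] :=
  (chi 0 (inord (2 * K.+1 + k)) +i* chi 0 (inord (3 * K.+1 + k)))%C.
Definition chi_dtau K (chi : 'rV[R]_((4 * K + 5).+1)) : R := chi 0 (inord (4 * K + 4)).
Definition chi_dth K (chi : 'rV[R]_((4 * K + 5).+1)) : R := chi 0 (inord (4 * K + 5)).

Definition obs (N Nt K : nat) (Ts : R) (s : 'cV[R[i]]_Nt) (n : nat)
    (chi : 'rV[R]_((4 * K + 5).+1)) : R[i] :=
  (@chan N Nt K Ts (chi_tau chi) (chi_th chi) (chi_gam chi) n
     *m @precoder N Nt Ts (chi_dtau chi) (chi_dth chi) n *m s) 0 0.

Definition cpartial d (f : 'rV[R]_d -> R[i]) (chi : 'rV[R]_d) (a : 'I_d) : R[i] :=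
  ('D_(delta_mx 0 a) (fun x => complex.Re (f x)) chi
   +i* 'D_(delta_mx 0 a) (fun x => complex.Im (f x)) chi)%C.

Definition FIM (N G Nt K : nat) (Ts sigma : R)
    (s : 'I_G -> 'I_N -> 'cV[R[i]]_Nt) (chi : 'rV[R]_((4 * K + 5).+1))
    : 'M[R]_((4 * K + 5).+1) :=
  (2 / sigma ^+ 2) *:
    \sum_(n < N) \sum_(g < G)
      \matrix_(a, b)
        complex.Re (conjc (cpartial (@obs N Nt K Ts (s g n) n) chi a)
                    * cpartial (@obs N Nt K Ts (s g n) n) chi b).

End Model.

(* The noise-free observations depend on the delays tau_k and on the delay
   shift Delta_tau only through the sums tau_k + Delta_tau.  Hence moving
   Delta_tau by h changes u^(g,n) by the sum of the changes caused by moving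
   each tau_k alone by h, and differentiating gives
   du/dDelta_tau = sum_k du/dtau_k for every g and n.  The fixed real vector
   e_Delta_tau - sum_k e_tau_k is therefore annihilated by every rank-one term
   Re{(grad u)^* (grad u)^T}, hence by J_chi. *)

From mathcomp Require Import all_boot all_order all_algebra.
From mathcomp Require Import all_classical all_reals all_analysis.
From mathcomp Require Import complex.
From mathcomp Require Import ring zify.
Import GRing.Theory.
Import numFieldNormedType.Exports.
Local Open Scope ring_scope.

Section DirectionalDerivative.
Variables (R : numFieldType) (V W : normedModType R).

Lemma derive_along_line (f : V -> W) x v :
  'D_v f x = 'D_1 (fun h : R => f (h *: v + x)) 0.
Proof.
rewrite /derive.
suff -> : (fun h : R => h^-1 *: ((f \o shift x) (h *: v) - f x)) =
  (fun h : R => h^-1 *: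
    (((fun h => f (h *: v + x)) \o shift 0) (h *: 1) - f (0 *: v + x))) by [].
by apply/funext => h /=; rewrite addr0 scale0r add0r [_%:A]mulr1.
Qed.

Lemma derive_increment_sum n (f : V -> W) x u (w : 'I_n -> V) :
  (forall h : R, f (h *: u + x) - f x = \sum_(j < n) (f (h *: w j + x) - f x)) ->
  (forall j, derivable f x (w j)) ->
  'D_u f x = \sum_(j < n) 'D_(w j) f x.
Proof.
move=> incr dw; pose line j (h : R^o) := f (h *: w j + x).
have dline j : derivable (line j) 0 1 by exact: (derivable1P f x (w j)).1 (dw j).
have dincr j : derivable (line j - cst (f x)) 0 1.
  by apply: derivableB => //; exact: derivable_cst.
rewrite derive_along_line.
have -> : (fun h : R^o => f (h *: u + x)) = cst (f x) + \sum_j (line j - cst (f x)).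
  by apply/funext => h; rewrite !fctE fct_sumE /= -incr addrC subrK.
rewrite deriveD ?derive_cst ?add0r ?derive_sum //; last exact: derivable_sum.
apply: eq_bigr => j _.
by rewrite deriveB ?derive_cst ?subr0 // [RHS]derive_along_line.
Qed.

End DirectionalDerivative.

Lemma inord_eq d p m : (p < d.+1)%N -> (m < d.+1)%N ->
  (inord p == inord m :> 'I_d.+1) = (p == m).
Proof. by move=> pd md; rewrite -val_eqE /= !inordK. Qed.

Section RowVectors.
Variable R : nzRingType.

Lemma row_shift_delta d (x : 'rV[R]_d) h (a b : 'I_d) :
  (h *: delta_mx 0 a + x) 0 b = x 0 b + (a == b)%:R * h.
Proof. by rewrite !mxE eqxx /= addrC mulr_natr mulr_natl eq_sym. Qed.

Lemma delta_sub_sum_neq0 d m (a : 'I_d) (w : 'I_m -> 'I_d) :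
  (forall j, w j != a) ->
  (delta_mx 0 a - \sum_j delta_mx 0 (w j) : 'rV[R]_d) != 0.
Proof.
move=> wa; apply/eqP => /rowP/(_ a); rewrite !mxE summxE big1 => [|j _].
  by rewrite !eqxx subr0 => /eqP; rewrite oner_eq0.
by rewrite !mxE eq_sym (negbTE (wa j)) andbF.
Qed.

End RowVectors.

Section ComplexParts.
Variable R : pzRingType.
Implicit Types x y : R[i].

Lemma complex_ReD x y : complex.Re (x + y) = complex.Re x + complex.Re y.
Proof. by case: x; case: y. Qed.

Lemma complex_ReB x y : complex.Re (x - y) = complex.Re x - complex.Re y.
Proof. by case: x; case: y. Qed.

Lemma complex_Re_sum I (r : seq I) (P : pred I) (F : I -> R[i]) :
  complex.Re (\sum_(i <- r | P i) F i) = \sum_(i <- r | P i) complex.Re (F i).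
Proof. by apply: big_morph; [exact: complex_ReD | reflexivity]. Qed.

Lemma sum_complex m (F G : 'I_m -> R) :
  ((\sum_j F j) +i* (\sum_j G j))%C = \sum_j (F j +i* G j)%C.
Proof. by elim/big_rec3: _ => [|j a b c _ <-]. Qed.

End ComplexParts.

Section RealGram.
Variable R : rcfType.

Lemma Re_gram_kernel d m (c : 'I_d -> R[i]) (a : 'I_d) (w : 'I_m -> 'I_d) :
  c a = \sum_j c (w j) ->
  (delta_mx 0 a - \sum_j delta_mx 0 (w j) : 'rV_d) *m
  \matrix_(a', b) complex.Re (conjc (c a') * c b) = 0.
Proof.
move=> ca; rewrite mulmxBl mulmx_suml -rowE.
under eq_bigr do rewrite -rowE.
apply/rowP => b; rewrite !mxE summxE.
under eq_bigr do rewrite !mxE.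
by rewrite ca raddf_sum mulr_suml complex_Re_sum subrr.
Qed.

End RealGram.

Section ComplexExponential.
Variable R : realType.
Implicit Types (z : R[i]) (t : R).

Lemma cexpjD t1 t2 : cexpj (t1 + t2) = cexpj t1 * cexpj t2.
Proof. by rewrite /cexpj cosD sinD [sin t1 * _ + _]addrC. Qed.

Lemma Re_mul_cexpj z t :
  complex.Re (z * cexpj t) = complex.Re z * cos t - complex.Im z * sin t.
Proof. by case: z. Qed.

Lemma derivable_Re_mul_cexpj z a w x :
  derivable (fun t => complex.Re (z * cexpj (a + w * t))) x 1.
Proof.
have affine : derivable (fun t : R => a + w * t) x 1.
  apply/derivable1_diffP.
  have -> : (fun t : R => a + w * t) = cst a + ( *:%R w) by apply/funext.
  exact: differentiableD.
under eq_fun do rewrite Re_mul_cexpj.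
apply: derivableB; apply: derivableZ; apply/derivable1_diffP/differentiable_comp;
  apply/derivable1_diffP.
- exact: affine.
- exact: derivable_cos.
- exact: affine.
- exact: derivable_sin.
Qed.

End ComplexExponential.

Section Observation.
Variables (R : realType) (N Nt K : nat) (Ts : R) (s : 'cV[R[i]]_Nt) (n : nat).
Local Notation d := (4 * K + 5).+1.
Local Notation u := (@obs R N Nt K Ts s n).
Implicit Types (chi : 'rV[R]_d) (h : R).

Definition tau_idx (k : 'I_K.+1) : 'I_d := inord k.
Definition dtau_idx : 'I_d := inord (4 * K + 4).

Lemma tau_idx_neq_dtau k : tau_idx k != dtau_idx.
Proof. by rewrite inord_eq //; move: (ltn_ord k); lia. Qed.

Definition omega : R := - (2 * pi * n%:R / (N%:R * Ts)).

Definition path_gain chi k : R[i] :=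
  chi_gam chi k *
    (herm (steer Nt (chi_th chi k)) *m diag_mx (herm (steer Nt (chi_dth chi))) *m s) 0 0.

Definition path_delay chi k : R := chi_tau chi k + chi_dtau chi.

Lemma obsE chi :
  u chi = \sum_k path_gain chi k * cexpj (omega * path_delay chi k).
Proof.
rewrite /obs /chan /precoder mulmx_suml mulmx_suml summxE.
apply: eq_bigr => k _.
rewrite -!scalemxAl -scalemxAr -scalemxAl !mxE /path_gain /path_delay.
have -> : omega * (chi_tau chi k + chi_dtau chi) =
    - (2 * pi * n%:R * chi_tau chi k / (N%:R * Ts)) +
    - (2 * pi * n%:R * chi_dtau chi / (N%:R * Ts)) by rewrite /omega; ring.
rewrite cexpjD [in RHS]mxE; ring.
Qed.

Lemma path_gain_shift chi h p k : (p <= K)%N || (p == 4 * K + 4) ->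
  path_gain (h *: delta_mx 0 (inord p) + chi) k = path_gain chi k.
Proof.
move=> hp; have other m : (K < m <= 4 * K + 3)%N || (m == 4 * K + 5) ->
    (h *: delta_mx 0 (inord p) + chi) 0 (inord m) = chi 0 (inord m).
  move=> hm; have pm : p != m by lia.
  by rewrite row_shift_delta inord_eq ?(negbTE pm) ?mul0r ?addr0 //; lia.
by rewrite /path_gain /chi_gam /chi_th /chi_dth !other //; move: (ltn_ord k); lia.
Qed.

Lemma path_delay_shift_tau chi h j k :
  path_delay (h *: delta_mx 0 (tau_idx j) + chi) k =
  path_delay chi k + (j == k)%:R * h.
Proof.
have jd : (j : nat) != 4 * K + 4 by move: (ltn_ord j); lia.
rewrite /path_delay /chi_tau /chi_dtau !row_shift_delta !inord_eq ?(negbTE jd);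
  try by move: (ltn_ord j) (ltn_ord k); lia.
by rewrite mul0r addr0 addrAC.
Qed.

Lemma path_delay_shift_dtau chi h k :
  path_delay (h *: delta_mx 0 dtau_idx + chi) k = path_delay chi k + h.
Proof.
have kd : 4 * K + 4 != k by move: (ltn_ord k); lia.
rewrite /path_delay /chi_tau /chi_dtau !row_shift_delta !inord_eq ?(negbTE kd) ?eqxx;
  try by move: (ltn_ord k); lia.
by rewrite mul0r addr0 mul1r addrA.
Qed.

Lemma obs_shift_tau chi h j :
  u (h *: delta_mx 0 (tau_idx j) + chi) - u chi =
  path_gain chi j *
  (cexpj (omega * (path_delay chi j + h)) - cexpj (omega * path_delay chi j)).
Proof.
rewrite !obsE -sumrB (bigD1 j) //= big1 ?addr0 => [|k kj].
  by rewrite path_gain_shift ?path_delay_shift_tau ?eqxx ?mul1r ?mulrBr ?leq_ord.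
rewrite path_gain_shift ?path_delay_shift_tau ?leq_ord //.
by rewrite eq_sym (negbTE kj) mul0r addr0 subrr.
Qed.

Lemma derivable_Re_obs_tau c chi j :
  derivable (fun x => complex.Re (c * u x)) chi (delta_mx 0 (tau_idx j)).
Proof.
apply/derivable1P.
set g := path_gain chi j; set y := path_delay chi j.
have -> : (fun h : R => complex.Re (c * u (h *: delta_mx 0 (tau_idx j) + chi))) =
    (fun h => complex.Re (c * g * cexpj (omega * y + omega * h))) +
    cst (complex.Re (c * u chi) - complex.Re (c * g * cexpj (omega * y))).
  apply/funext => h; rewrite !fctE -[u _](subrK (u chi)) obs_shift_tau -/g -/y.
  have -> : c * (g * (cexpj (omega * (y + h)) - cexpj (omega * y)) + u chi) =
      c * g * cexpj (omega * y + omega * h) + (c * u chi - c * g * cexpj (omega * y)).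
    rewrite [omega * (y + h)]mulrDr; ring.
  by rewrite complex_ReD complex_ReB.
apply: derivableD; first exact: derivable_Re_mul_cexpj.
exact: derivable_cst.
Qed.

Lemma obs_increment_dtau chi h :
  u (h *: delta_mx 0 dtau_idx + chi) - u chi =
  \sum_j (u (h *: delta_mx 0 (tau_idx j) + chi) - u chi).
Proof.
under eq_bigr do rewrite obs_shift_tau.
rewrite !obsE -sumrB; apply: eq_bigr => k _.
by rewrite path_gain_shift ?path_delay_shift_dtau ?eqxx ?orbT ?mulrBr.
Qed.

Lemma Re_obs_increment_dtau c chi h :
  complex.Re (c * u (h *: delta_mx 0 dtau_idx + chi)) - complex.Re (c * u chi) =
  \sum_j (complex.Re (c * u (h *: delta_mx 0 (tau_idx j) + chi)) -
          complex.Re (c * u chi)).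
Proof.
have ReB x :
    complex.Re (c * u x) - complex.Re (c * u chi) = complex.Re (c * (u x - u chi)).
  by rewrite mulrBr complex_ReB.
(* Rewriting everywhere would also try to unify dtau_idx with each tau_idx j,
   which unfolds the matrices and does not terminate in practice. *)
rewrite [LHS]ReB obs_increment_dtau mulr_sumr complex_Re_sum.
by apply: eq_bigr => j _; rewrite ReB.
Qed.

Lemma derive_obs_dtau (f : 'rV[R]_d -> R) c chi :
  (forall x, f x = complex.Re (c * u x)) ->
  'D_(delta_mx 0 dtau_idx) f chi = \sum_j 'D_(delta_mx 0 (tau_idx j)) f chi.
Proof.
move=> /funext ->; apply: derive_increment_sum => [h | j].
- exact: Re_obs_increment_dtau.
- exact: derivable_Re_obs_tau.
Qed.

Lemma cpartial_obs_dtau chi :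
  cpartial u chi dtau_idx = \sum_j cpartial u chi (tau_idx j).
Proof.
rewrite /cpartial (derive_obs_dtau _ 1) => [|x]; last by rewrite mul1r.
rewrite (derive_obs_dtau _ (- 'i%C)) => [|x]; last by case: (u x) => a b /=; ring.
exact: sum_complex.
Qed.

End Observation.

Theorem proposition2 (R : realType) (N G Nt K : nat) (Ts sigma : R)
    (s : 'I_G -> 'I_N -> 'cV[R[i]]_Nt) (chi : 'rV[R]_((4 * K + 5).+1)) :
  (0 < N)%N -> (0 < G)%N -> (0 < Nt)%N -> 0 < Ts -> 0 < sigma ->
  \det (FIM Ts sigma s chi) = 0.
Proof.
move=> _ _ _ _ _.
apply/eqP/det0P; exists (delta_mx 0 (dtau_idx K) - \sum_j delta_mx 0 (tau_idx K j)).
  by apply: delta_sub_sum_neq0 => j; exact: tau_idx_neq_dtau.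
rewrite /FIM -scalemxAr mulmx_sumr big1 ?scaler0 // => n _.
rewrite mulmx_sumr big1 // => g _.
exact/Re_gram_kernel/cpartial_obs_dtau.
Qed.
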